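(* For all integers $k\geq 1$ and $n\geq \frac{1}{2}\left(\binom{2k}{k}-2\right)k^2$, $$f_2(n,k)\geq \left\lfloor \frac{n}{k}\right\rfloor+\binom{2k}{k}\frac{k}{2}-k.$$
   Context: For a set $A$ and integer $k\ge1$, the Kneser graph $KG(A,k)$ has vertex set the family of all $k$-element subsets of $A$, two vertices $X,Y$ being adjacent iff $X\cap Y=\emptyset$; $KG(n,k)$ denotes a Kneser graph with an $n$-element base set. The xor-product $G\cdot H$ of graphs $G,H$ has vertex set $V(G)\times V(H)$, and $(g,h)$, $(g',h')$ are adjacent iff exactly one of the following holds: $gg'\in E(G)$, $hh'\in E(H)$. $f_\ell(n,k)$ denotes the clique number of the xor-product of $\ell$ copies of $KG(n,k)$. Equivalently, $f_\ell(n,k)$ is the maximum size of a family $\mathcal S$ of subsets of $A_1\cup\dots\cup A_\ell$, where $A_1,\dots,A_\ell$ are pairwise disjoint $n$-element sets, such that $|S\cap A_i|=k$ for all $S\in\mathcal S$ and all $i$, and for any two distinct $S,T\in\mathcal S$ the number of indices $i\in\{1,\dots,\ell\}$ with $S\cap T\cap A_i=\emptyset$ is odd (an ''$\ell$-semi-intersecting family with parameters $n$ and $k$''). *)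

From mathcomp Require Import all_boot.
Set Implicit Arguments. Unset Strict Implicit. Unset Printing Implicit Defensive.

(* Ground set A_1 u ... u A_l is modelled as 'I_l * 'I_n :
   A_i = [set x | x.1 == i], each of size n, pairwise disjoint. *)

Definition part (l n : nat) (S : {set 'I_l * 'I_n}) (i : 'I_l) : {set 'I_l * 'I_n} :=
  [set x in S | x.1 == i].

Definition semi_intersecting (l n k : nat) (F : {set {set 'I_l * 'I_n}}) : bool :=
  [forall S in F, forall i : 'I_l, #|part S i| == k] &&
  [forall S in F, forall T in F,
     (S != T) ==> odd #|[set i : 'I_l | part (S :&: T) i == set0]|].

Definition f (l n k : nat) : nat :=
  \max_(F : {set {set 'I_l * 'I_n}} | semi_intersecting k F) #|F|.

(* A 2-semi-intersecting family is a family of pairs (S :&: A_1, S :&: A_2) of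
   k-sets in which, for any two members, exactly one coordinate is disjoint.
   Fix b in [2k]: the k-subsets of [2k] containing b are X_0, Y_1, ..., Y_p with
   p = C(2k,k)/2 - 1, and with Z_i the complement of Y_i any two of the sets
   X_0, Y_i, Z_i meet, except Y_i and Z_i.  In A_2 place p disjoint k x k grids
   and floor(n/k) - pk further disjoint rows of length k; pair Y_i with the rows
   of the i-th grid, Z_i with its columns and X_0 with the extra rows.  Two of
   these second coordinates meet exactly when they are a row and a column of the
   same grid, i.e. exactly when the first coordinates are disjoint, giving
   floor(n/k) + pk members; the grids fit into A_2 because pk^2 <= n. *)

From mathcomp Require Import all_boot zify.
Set Implicit Arguments. Unset Strict Implicit. Unset Printing Implicit Defensive.

Definition xor_disjoint (T1 T2 : finType) (P Q : {set T1} * {set T2}) : bool :=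
  (P.1 :&: Q.1 == set0) (+) (P.2 :&: Q.2 == set0).

Lemma xor_disjointC (T1 T2 : finType) (P Q : {set T1} * {set T2}) :
  xor_disjoint P Q = xor_disjoint Q P.
Proof. by rewrite /xor_disjoint setIC [Q.2 :&: _]setIC. Qed.

Lemma xor_disjoint_diag (T1 T2 : finType) (P : {set T1} * {set T2}) :
  #|P.1| = #|P.2| -> xor_disjoint P P = false.
Proof. by move=> eq_card; rewrite /xor_disjoint !setIid -!cards_eq0 eq_card addbb. Qed.

Lemma xor_disjoint_imset (T1 T2 U1 U2 : finType) (e1 : T1 -> U1) (e2 : T2 -> U2)
    (P Q : {set T1} * {set T2}) :
  injective e1 -> injective e2 ->
  xor_disjoint (e1 @: P.1, e2 @: P.2) (e1 @: Q.1, e2 @: Q.2) = xor_disjoint P Q.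
Proof.
move=> inj1 inj2; rewrite /xor_disjoint /= -!imsetI ?imset_eq0 //.
  by move=> x y _ _ /inj2.
by move=> x y _ _ /inj1.
Qed.

Definition pair_set n (P : {set 'I_n} * {set 'I_n}) : {set 'I_2 * 'I_n} :=
  [set x | x.2 \in if x.1 == ord0 then P.1 else P.2].

Lemma part_pair_set n (P : {set 'I_n} * {set 'I_n}) i :
  part (pair_set P) i = pair i @: (if i == ord0 then P.1 else P.2).
Proof.
apply/setP => -[j x]; rewrite !inE /=.
have [-> | ne_ji] := eqVneq j i; first by rewrite andbT mem_imset //; move=> ? ? [].
by rewrite andbF; apply/esym/imsetP => -[y _ [eq_ji _]]; rewrite eq_ji eqxx in ne_ji.
Qed.

Lemma pair_setI n (P Q : {set 'I_n} * {set 'I_n}) :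
  pair_set P :&: pair_set Q = pair_set (P.1 :&: Q.1, P.2 :&: Q.2).
Proof. by apply/setP => x; rewrite !inE /=; case: (_ == _); rewrite inE. Qed.

Lemma pair_set_inj n : injective (@pair_set n).
Proof.
move=> [A B] [A' B'] /setP eqAB; congr (_, _); apply/setP => x.
  by have := eqAB (ord0, x); rewrite !inE.
by have := eqAB (ord_max, x); rewrite !inE.
Qed.

Lemma odd_card_I2 (p : pred 'I_2) : odd #|[set i | p i]| = p ord0 (+) p ord_max.
Proof.
rewrite -sum1dep_card big_mkcond !big_ord_recr big_ord0 /=.
have -> : widen_ord (leqnSn 1) ord_max = ord0 :> 'I_2 by apply: val_inj.
by case: (p ord0); case: (p ord_max).
Qed.

Lemma odd_card_empty_parts n (P Q : {set 'I_n} * {set 'I_n}) :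
  odd #|[set i : 'I_2 | part (pair_set P :&: pair_set Q) i == set0]| = xor_disjoint P Q.
Proof.
by rewrite pair_setI odd_card_I2 !part_pair_set !imset_eq0.
Qed.

Lemma f2_ge_xor_pairs_ord n k (I : finType) (g : I -> {set 'I_n} * {set 'I_n}) :
  (forall i, #|(g i).1| = k /\ #|(g i).2| = k) ->
  (forall i j, i != j -> xor_disjoint (g i) (g j)) ->
  #|I| <= f 2 n k.
Proof.
move=> card_g xor_g.
have inj_g : injective (fun i => pair_set (g i)).
  move=> i j /pair_set_inj eq_g; apply/eqP.
  apply: contraFT (xor_disjoint_diag (P := g j) _).
    by move/xor_g; rewrite eq_g.
  by case: (card_g j) => -> ->.
rewrite -(card_imset _ inj_g).
apply: (leq_bigmax_cond (P := semi_intersecting k) (F := fun F => #|F|)).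
apply/andP; split; apply/forallP => S; apply/implyP => /imsetP[i _ ->].
  apply/forallP => p; rewrite part_pair_set card_imset; last by move=> ? ? [].
  by case: ifP; rewrite ?(card_g i).1 ?(card_g i).2.
apply/forallP => T; apply/implyP => /imsetP[j _ ->]; apply/implyP => ne_ij.
by rewrite odd_card_empty_parts xor_g //; apply: contraNneq ne_ij => ->.
Qed.

Lemma widen_enum_rank_inj (T : finType) n (le_Tn : #|T| <= n) :
  injective (fun x => widen_ord le_Tn (enum_rank x)).
Proof. by move=> x y /(congr1 val) eq_xy; apply/enum_rank_inj/val_inj. Qed.

Lemma f2_ge_xor_pairs (T1 T2 I : finType) n k (g : I -> {set T1} * {set T2}) :
  #|T1| <= n -> #|T2| <= n ->
  (forall i, #|(g i).1| = k /\ #|(g i).2| = k) ->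
  (forall i j, i != j -> xor_disjoint (g i) (g j)) ->
  #|I| <= f 2 n k.
Proof.
move=> le_T1n le_T2n card_g xor_g.
pose e1 x := widen_ord le_T1n (enum_rank x).
pose e2 x := widen_ord le_T2n (enum_rank x).
have inj1 : injective e1 := widen_enum_rank_inj (le_Tn := le_T1n).
have inj2 : injective e2 := widen_enum_rank_inj (le_Tn := le_T2n).
apply: (@f2_ge_xor_pairs_ord n k I (fun i => (e1 @: (g i).1, e2 @: (g i).2))).
  by move=> i; rewrite !card_imset //; apply: card_g.
by move=> i j ne_ij; rewrite xor_disjoint_imset // xor_g.
Qed.

Lemma imsetI_eq0 (U V W : finType) (f : U -> W) (g : V -> W) :
  (forall u v, f u != g v) -> [set f u | u : U] :&: [set g v | v : V] == set0.
Proof.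
move=> ne_fg; apply/set0Pn => -[_ /setIP[/imsetP[u _ ->] /imsetP[v _]]].
exact/eqP/ne_fg.
Qed.

Lemma imsetI_neq0 (U V W : finType) (f : U -> W) (g : V -> W) u v :
  f u = g v -> [set f u | u : U] :&: [set g v | v : V] != set0.
Proof.
by move=> eq_fg; apply/set0Pn; exists (f u); apply/setIP; split; [|rewrite eq_fg];
  apply: imset_f.
Qed.

Section Grid.

Variables (T J : finType) (k : nat) (X0 : {set T}) (Y Z : J -> {set T}).
Hypotheses (k_gt0 : 0 < k) (card_X0 : #|X0| = k) (card_Y : forall i, #|Y i| = k)
  (card_Z : forall i, #|Z i| = k).
Hypotheses (YZ_disjoint : forall i, Y i :&: Z i = set0)
  (YZ_meet : forall i j, i != j -> Y i :&: Z j != set0)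
  (YY_meet : forall i j, Y i :&: Y j != set0) (ZZ_meet : forall i j, Z i :&: Z j != set0)
  (X0Y_meet : forall i, X0 :&: Y i != set0) (X0Z_meet : forall i, X0 :&: Z i != set0).

Definition grid_pair m (a : 'I_m + J * 'I_k * bool) :
    {set T} * {set 'I_m * 'I_k + J * 'I_k * 'I_k} :=
  match a with
  | inl j => (X0, [set inl (j, c) | c : 'I_k])
  | inr (i, r, true) => (Y i, [set inr (i, r, c) | c : 'I_k])
  | inr (i, r, false) => (Z i, [set inr (i, c, r) | c : 'I_k])
  end.

Lemma card_grid_pair m (a : 'I_m + J * 'I_k * bool) :
  #|(grid_pair a).1| = k /\ #|(grid_pair a).2| = k.
Proof.
by case: a => [j|[[i r] []]]; rewrite /= card_imset ?card_ord //; move=> c c' [].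
Qed.

Definition grid_rank m (a : 'I_m + J * 'I_k * bool) : nat :=
  match a with inl _ => 0 | inr (_, _, true) => 1 | inr (_, _, false) => 2 end.

Lemma grid_pair_xor m (a b : 'I_m + J * 'I_k * bool) :
  a != b -> xor_disjoint (grid_pair a) (grid_pair b).
Proof.
wlog le_ab : a b / grid_rank a <= grid_rank b => [sym|].
  have [le_ab|/ltnW le_ba] := leqP (grid_rank a) (grid_rank b); first exact: sym.
  by rewrite xor_disjointC eq_sym; apply: sym.
case: a b le_ab => [j|[[i r] []]] [j'|[[i' r'] []]] //= _ ne_ab; rewrite /xor_disjoint /=.
- rewrite setIid -cards_eq0 card_X0 eqn0Ngt k_gt0 imsetI_eq0 // => c c'.
  by apply: contraNneq ne_ab => -[-> _].
- by rewrite (negbTE (X0Y_meet i')) imsetI_eq0.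
- by rewrite (negbTE (X0Z_meet i')) imsetI_eq0.
- rewrite (negbTE (YY_meet i i')) imsetI_eq0 // => c c'.
  by apply: contraNneq ne_ab => -[-> -> _].
- have [<-|ne_ii'] := eqVneq i i'.
    by rewrite YZ_disjoint eqxx (negbTE (imsetI_neq0 (u := r') (v := r) _)).
  rewrite (negbTE (YZ_meet ne_ii')) imsetI_eq0 // => c c'.
  by apply: contraNneq ne_ii' => -[->].
- rewrite (negbTE (ZZ_meet i i')) imsetI_eq0 // => c c'.
  by apply: contraNneq ne_ab => -[-> _ ->].
Qed.

Lemma f2_ge_grid n : #|T| <= n -> #|J| * k * k <= n -> n %/ k + #|J| * k <= f 2 n k.
Proof.
move=> le_Tn le_JKn.
have le_JK : #|J| * k <= n %/ k by rewrite leq_divRL.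
pose m := n %/ k - #|J| * k.
have le_grid_n : #|{: 'I_m * 'I_k + J * 'I_k * 'I_k}| <= n.
  rewrite card_sum !card_prod !card_ord -mulnDl subnK //; exact: leq_divM.
apply: leq_trans (f2_ge_xor_pairs le_Tn le_grid_n (@card_grid_pair m) (@grid_pair_xor m)).
by rewrite card_sum !card_prod !card_ord card_bool /m; lia.
Qed.

End Grid.

Lemma setI_setC_neq0 (T : finType) (A B : {set T}) :
  #|B| <= #|A| -> A != B -> A :&: ~: B != set0.
Proof.
by move=> le_BA; apply: contra; rewrite -setDE setD_eq0 eqEcard le_BA andbT.
Qed.

Lemma setCI_neq0 (T : finType) (A B : {set T}) :
  #|A| + #|B| <= #|T| -> A :&: B != set0 -> ~: A :&: ~: B != set0.
Proof.
rewrite -setCU -!card_gt0 => le_ABT meet_AB.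
have := subset_leq_card (subsetIl A B); have := cardsC (A :|: B).
rewrite cardsU; lia.
Qed.

Lemma card_draws_mem_double (T : finType) k (b : T) : #|T| = k.*2 ->
  #|[set X : {set T} | (#|X| == k) && (b \in X)]|.*2 = 'C(k.*2, k).
Proof.
move=> card_T; set Q := [set X | _].
have card_setC (X : {set T}) : (#|~: X| == k) = (#|X| == k).
  by have := cardsC X; rewrite card_T; lia.
have -> : 'C(k.*2, k) = #|[set X : {set T} | #|X| == k]| by rewrite card_draws card_T.
rewrite -addnn -[in RHS](cardsID [set X : {set T} | b \in X]); congr (_ + _).
  by apply: eq_card => X; rewrite !inE.
rewrite -(card_preimset _ (@setC_inj T)); apply: eq_card => X.
by rewrite !inE card_setC andbC.
Qed.

Lemma odd_central_binomial k : 0 < k -> odd 'C(k.*2, k) = false.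
Proof.
move=> k_gt0; have b : 'I_(k.*2) by exists 0; rewrite double_gt0.
by rewrite -(card_draws_mem_double b) ?card_ord // odd_double.
Qed.

Lemma f2_ge_div n k : 0 < k -> n %/ k <= f 2 n k.
Proof.
move=> k_gt0; have [le_kn|lt_nk] := leqP k n; last by rewrite divn_small.
apply: leq_trans (leq_addr (#|'I_0| * k) _) _.
apply: (@f2_ge_grid 'I_k _ _ setT (fun _ => set0) (fun _ => set0));
  by rewrite ?cardsT ?card_ord // => -[].
Qed.

Lemma f2_ge_central_binomial n k : 0 < k -> k.*2 <= n ->
  ('C(k.*2, k)./2 - 1) * k * k <= n ->
  n %/ k + ('C(k.*2, k)./2 - 1) * k <= f 2 n k.
Proof.
move=> k_gt0 le_2kn le_n.
have b : 'I_(k.*2) by exists 0; rewrite double_gt0.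
set Q := [set X : {set 'I_(k.*2)} | (#|X| == k) && (b \in X)].
have card_Q : #|Q| = 'C(k.*2, k)./2.
  by rewrite -(card_draws_mem_double b) ?card_ord // doubleK.
have card_setC (X : {set 'I_(k.*2)}) : #|X| = k -> #|~: X| = k.
  by move=> card_X; have := cardsC X; rewrite card_ord card_X; lia.
have meet_b (A B : {set 'I_(k.*2)}) : b \in A -> b \in B -> A :&: B != set0.
  by move=> bA bB; apply/set0Pn; exists b; apply/setIP.
have /set0Pn[X0 X0_Q] : Q != set0.
  rewrite -card_gt0 card_Q -double_gt0 even_halfK ?odd_central_binomial //.
  by rewrite bin_gt0 -addnn leq_addr.
have [card_X0 b_X0] : #|X0| = k /\ b \in X0 by move: X0_Q; rewrite inE => /andP[/eqP].
pose J := {X | X \in Q :\ X0}.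
have card_J : #|{: J}| = 'C(k.*2, k)./2 - 1.
  by have := cardsD1 X0 Q; rewrite card_sig X0_Q card_Q /= => ->; rewrite addKn.
have memJ (i : J) : [/\ #|val i| = k, b \in val i & val i != X0].
  by have := valP i; rewrite !inE => /andP[-> /andP[/eqP-> ->]].
rewrite -card_J; apply: (@f2_ge_grid _ _ _ X0 val (fun i => ~: val i)) => //.
- by move=> i; case: (memJ i).
- by move=> i; case: (memJ i) => /card_setC.
- by move=> i; rewrite setICr.
- move=> i j ne_ij; case: (memJ i) (memJ j) => [card_i _ _] [card_j _ _].
  by apply: setI_setC_neq0; [rewrite card_i card_j | apply: contra ne_ij => /eqP/val_inj ->].
- by move=> i j; case: (memJ i) (memJ j) => [_ b_i _] [_ b_j _]; apply: meet_b.
- move=> i j; case: (memJ i) (memJ j) => [card_i b_i _] [card_j b_j _].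
  by apply: setCI_neq0; [rewrite card_i card_j card_ord addnn | apply: meet_b].
- by move=> i; case: (memJ i) => _ b_i _; apply: meet_b.
- move=> i; case: (memJ i) => card_i _ ne_i.
  by apply: setI_setC_neq0; rewrite 1?eq_sym // card_i card_X0.
- by rewrite card_ord.
- by rewrite card_J.
Qed.

Unset Implicit Arguments.
Theorem theorem1p1 (k n : nat) :
  1 <= k ->
  ('C(k.*2, k) - 2) * k ^ 2 <= n.*2 ->
  n %/ k + 'C(k.*2, k) * k %/ 2 - k <= f 2 n k.
Proof.
move=> k_gt0 le_n2.
have even_C := even_halfK (negbT (odd_central_binomial k_gt0)).
set q := 'C(k.*2, k)./2 in even_C *.
have q_gt0 : 0 < q by rewrite -double_gt0 even_C bin_gt0 -addnn leq_addr.
rewrite -{}even_C in le_n2 *; rewrite -muln2 mulnAC mulnK //.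
have le_qn : (q - 1) * k * k <= n by move: le_n2; rewrite -mulnn; nia.
have -> : n %/ k + q * k - k = n %/ k + (q - 1) * k by rewrite mulnBl mul1n; nia.
have [le_2kn|lt_n2k] := leqP k.*2 n; first exact: f2_ge_central_binomial.
have -> : q - 1 = 0.
  have [k1|k_gt1] := leqP k 1; last by nia.
  by rewrite /q (_ : k = 1) //; lia.
by rewrite mul0n addn0 f2_ge_div.
Qed.
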